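(* Consider the finite-sum problem $\min_{\theta\in\mathbb{R}^n}\Psi(\theta)=\frac1N\sum_{i=1}^N\psi_i(\theta)$ and the following stochastic method (S2QN). Fix constants $0<r_1<r_2$, a positive sequence $\{\alpha_k\}$, and step sizes $\beta_k\equiv 1$. At iteration $k$, random index sets $\mathcal S_g^k\subseteq\{1,\dots,N\}$ are chosen, $g_k=\nabla_{\mathcal S_g^k}\Psi(\theta_k):=\frac{1}{|\mathcal S_g^k|}\sum_{i\in\mathcal S_g^k}\nabla\psi_i(\theta_k)$, a symmetric matrix $B_k=H_k+\Lambda_k$ is formed (base matrix $H_k$ plus quasi-Newton refinement matrix $\Lambda_k$), the regularization parameter is $$\lambda_k=\begin{cases}\frac{2r_1}{\|g_{k-1}\|+r_1}\alpha_k^{-1}, & \|g_{k-1}\|<r_1,\\ \frac{2\|g_{k-1}\|}{\|g_{k-1}\|+r_2}\alpha_k^{-1}, & \|g_{k-1}\|>r_2,\\ \alpha_k^{-1}, &\text{otherwise},\end{cases}$$ and $\theta_{k+1}=\theta_k+\beta_k d_k$ with $d_k=-(B_k+\lambda_kI)^{-1}g_k$. Let $\{\mathcal F_k\}$ be a filtration with $\theta_k$ being $\mathcal F_{k-1}$-measurable. Assume: (i) $\Psi$ is continuously differentiable on $\mathbb{R}^n$, bounded below by $\Psi_{\inf}$, and $\nabla\Psi$ is Lipschitz continuous on $\mathbb{R}^n$ with constant $L_\Psi\ge 1$; (ii) for every $k$, $B_k$ and $\nabla_{\mathcal S_g^k}\Psi(\theta_k)$ are conditionally independent given $\mathcal F_{k-1}$,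 and almost surely $\mathbb{E}[\nabla_{\mathcal S_g^k}\Psi(\theta_k)\mid\mathcal F_{k-1}]=\nabla\Psi(\theta_k)$; (iii) almost surely $\mathbb{E}[\|\nabla_{\mathcal S_g^k}\Psi(\theta_k)-\nabla\Psi(\theta_k)\|^2\mid\mathcal F_{k-1}]\le\sigma_k^2$; (iv) there is $h>0$ with $0\preceq B_k\preceq hI$ for all $k$. If $\alpha_k\le\frac{r_1}{4r_2(L_\Psi+h)}$ for all $k$, $\sum_k\alpha_k=\infty$ and $\sum_k\alpha_k\sigma_k^2<\infty$, then almost surely $\lim_{k\to\infty}\nabla\Psi(\theta_k)=0$.
   Context: $\psi_i:\mathbb{R}^n\to\mathbb{R}$ are component functions. The base matrix $H_k$ represents partial Hessian information (e.g. a subsampled Hessian or a Gauss–Newton/Fisher approximation) and $\Lambda_k$ is a quasi-Newton matrix built from previous iterates; the theorem only uses the properties (ii) and (iv) of $B_k=H_k+\Lambda_k$. $g_{k-1}$ denotes the stochastic gradient used at the previous iteration. *)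

From HB Require Import structures.
From mathcomp Require Import all_boot all_order all_algebra.
From mathcomp Require Import all_classical all_reals all_analysis.
Set Implicit Arguments. Unset Strict Implicit. Unset Printing Implicit Defensive.
Import Order.TTheory GRing.Theory Num.Theory.
Import numFieldNormedType.Exports.
Local Open Scope classical_set_scope.
Local Open Scope ring_scope.

Section Defs.
Context {R : realType}.

Definition enorm {n : nat} (v : 'cV[R]_n) : R := Num.sqrt (\sum_i v i 0 ^+ 2).

Definition grad {n : nat} (f : 'cV[R]_n -> R) (x : 'cV[R]_n) : 'cV[R]_n :=
  \col_i ('D_(delta_mx i 0) f x).

Definition symmetric_mx {n : nat} (B : 'M[R]_n) : Prop := B^T = B.
Definition psd_between {n : nat} (B : 'M[R]_n) (h : R) : Prop :=
  forall v : 'cV[R]_n, 0 <= (v^T *m B *m v) 0 0 <= h * (v^T *m v) 0 0.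

Definition reg_lambda (r1 r2 a ng : R) : R :=
  if ng < r1 then (2 * r1) / (ng + r1) * a^-1
  else if r2 < ng then (2 * ng) / (ng + r2) * a^-1
  else a^-1.
End Defs.

Section Prob.
Context {d : measure_display} {T : measurableType d} {R : realType}.
Variable P : probability T R.

Definition sub_sigma (G : set (set T)) : Prop :=
  sigma_algebra setT G /\ G `<=` measurable.

Definition filtration (F : nat -> set (set T)) : Prop :=
  (forall k, sub_sigma (F k)) /\ (forall k, F k `<=` F k.+1).

Definition meas_wrt (G : set (set T)) (X : T -> R) : Prop :=
  forall B : set R, measurable B -> G (X @^-1` B).

Definition mx_meas_wrt {p q : nat} (G : set (set T)) (X : T -> 'M[R]_(p, q)) : Prop :=
  forall i j, meas_wrt G (fun w => X w i j).

Definition is_cond_exp (G : set (set T)) (X Y : T -> R) : Prop :=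
  meas_wrt G Y /\
  P.-integrable setT (EFin \o X) /\ P.-integrable setT (EFin \o Y) /\
  forall A, G A -> (\int[P]_(w in A) (X w)%:E = \int[P]_(w in A) (Y w)%:E)%E.

Definition sigma_of {p q : nat} (X : T -> 'M[R]_(p, q)) : set (set T) :=
  <<s [set E | exists i j (B : set R), measurable B /\
                 E = (fun w => X w i j) @^-1` B] >>.

Definition cond_indep {p q p' q' : nat} (G : set (set T))
    (X : T -> 'M[R]_(p, q)) (Y : T -> 'M[R]_(p', q')) : Prop :=
  forall A C, sigma_of X A -> sigma_of Y C ->
  forall pA pC pAC,
    is_cond_exp G (\1_A) pA -> is_cond_exp G (\1_C) pC ->
    is_cond_exp G (\1_(A `&` C)) pAC ->
    {ae P, forall w, pAC w = pA w * pC w}.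
End Prob.

From HB Require Import structures.
From mathcomp Require Import all_boot all_order all_algebra.
From mathcomp Require Import all_classical all_reals all_analysis.
From mathcomp Require Import ring lra measurable_realfun.
Set Implicit Arguments.
Unset Strict Implicit.
Unset Printing Implicit Defensive.
Import Order.TTheory GRing.Theory Num.Theory.
Import numFieldNormedType.Exports.
Local Open Scope classical_set_scope.
Local Open Scope ring_scope.

(* With [alpha_k (L + h) <= 1/4] and [lambda_k alpha_k] in [[1, 2]], the regularized
   quasi-Newton step [-(B_k + lambda_k I)^-1 g_k] behaves like a gradient step of
   length [alpha_k].  Writing [e_k = g_k - grad Psi(theta_k)], the descent lemma gives
     Psi(theta_{k+1}) <= Psi(theta_k) - alpha_k/20 |grad Psi(theta_k)|^2 + 6 alpha_k |e_k|^2,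
   and the Lipschitz gradient gives
     |grad Psi(theta_{k+1})|^2 <= |grad Psi(theta_k)|^2
                                  + 6 L alpha_k (|grad Psi(theta_k)|^2 + |e_k|^2).
   The conditional variance bound makes [E (\sum_k alpha_k |e_k|^2)] finite, so this
   series converges almost surely.  On such a path, telescoping the first inequality
   bounds [\sum_k alpha_k |grad Psi(theta_k)|^2]; as [\sum_k alpha_k] diverges, the
   gradient is small infinitely often, and the second inequality, whose increments
   are now summable, keeps it small from some point on. *)

Section RealFieldInequalities.
Context {R : realFieldType}.

Lemma discriminant_le (a b c : R) : 0 <= c ->
  (forall t, 0 <= a + 2 * b * t + c * t ^+ 2) -> b ^+ 2 <= a * c.
Proof.
move=> c_ge0 nonneg.
have [c0|c_neq0] := eqVneq c 0.
  have [->|b_neq0] := eqVneq b 0; first by rewrite c0 expr0n mulr0.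
  have := nonneg (- (a + 1) / (2 * b)); rewrite c0 mul0r addr0.
  have -> : 2 * b * (- (a + 1) / (2 * b)) = - (a + 1) by field.
  lra.
have c_gt0 : 0 < c by rewrite lt_neqAle eq_sym c_neq0.
have := nonneg (- b / c).
have -> : a + 2 * b * (- b / c) + c * (- b / c) ^+ 2 = (a * c - b ^+ 2) / c.
  by field.
by rewrite pmulr_lge0 ?invr_gt0 // subr_ge0.
Qed.

Lemma le_mul_of_mul_le (x y l a : R) :
  0 < a -> 1 <= l * a -> 0 <= x -> l * x <= y -> x <= a * y.
Proof.
move=> a_gt0 la_ge1 x_ge0 lx_le.
apply: le_trans (_ : x <= a * (l * x)) _; last by rewrite ler_pM2l.
by rewrite mulrA (mulrC a) ler_peMl.
Qed.

Lemma sqr_le_of_increment (u v s q : R) : 0 <= u -> 0 <= v -> 0 <= s ->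
  0 <= q -> q <= 1/4 -> v <= u + q * (u + s) ->
  v ^+ 2 <= u ^+ 2 + 6 * q * (u ^+ 2 + s ^+ 2).
Proof.
move=> u_ge0 v_ge0 s_ge0 q_ge0 q_le v_le.
set t := q * (u + s).
have t_ge0 : 0 <= t by rewrite mulr_ge0 // addr_ge0.
have sqr_v : v ^+ 2 <= (u + t) ^+ 2 by rewrite ler_sqr ?nnegrE ?addr_ge0.
have sqr_t : t ^+ 2 <= q * (1/4) * (u + s) ^+ 2.
  rewrite /t exprMn; apply: ler_wpM2r; first exact: sqr_ge0.
  by rewrite expr2; apply: ler_wpM2l.
have : 0 <= q * (u - s) ^+ 2 by rewrite mulr_ge0 ?sqr_ge0.
have : 0 <= q * u ^+ 2 by rewrite mulr_ge0 ?sqr_ge0.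
have : 0 <= q * s ^+ 2 by rewrite mulr_ge0 ?sqr_ge0.
rewrite /t in sqr_v sqr_t; nra.
Qed.

End RealFieldInequalities.

Section Euclidean.
Context {R : realType} {n : nat}.
Implicit Types (u v w : 'cV[R]_n).

Definition dot u v : R := (u^T *m v) 0 0.

Lemma dotE u v : dot u v = \sum_i u i 0 * v i 0.
Proof. by rewrite /dot mxE; apply: eq_bigr => i _; rewrite mxE. Qed.

Lemma dotC u v : dot u v = dot v u.
Proof. by rewrite !dotE; apply: eq_bigr => i _; rewrite mulrC. Qed.

Lemma dotDl u v w : dot (u + v) w = dot u w + dot v w.
Proof. by rewrite !dotE -big_split; apply: eq_bigr => i _; rewrite mxE mulrDl. Qed.

Lemma dotDr u v w : dot w (u + v) = dot w u + dot w v.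
Proof. by rewrite dotC dotDl !(dotC w). Qed.

Lemma dotZl (c : R) u v : dot (c *: u) v = c * dot u v.
Proof. by rewrite !dotE mulr_sumr; apply: eq_bigr => i _; rewrite mxE mulrA. Qed.

Lemma dotZr (c : R) u v : dot v (c *: u) = c * dot v u.
Proof. by rewrite dotC dotZl dotC. Qed.

Lemma dotNl u v : dot (- u) v = - dot u v.
Proof. by rewrite -scaleN1r dotZl mulN1r. Qed.

Lemma dotNr u v : dot v (- u) = - dot v u.
Proof. by rewrite dotC dotNl dotC. Qed.

Lemma dotBl u v w : dot (u - v) w = dot u w - dot v w.
Proof. by rewrite dotDl dotNl. Qed.

Lemma dot_ge0 u : 0 <= dot u u.
Proof. by rewrite dotE; apply: sumr_ge0 => i _; rewrite -expr2 sqr_ge0. Qed.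

Lemma dot_eq0 u : dot u u = 0 -> u = 0.
Proof.
rewrite dotE => /eqP; rewrite psumr_eq0 => [/allP u0|i _]; last first.
  by rewrite -expr2 sqr_ge0.
apply/matrixP => i j; rewrite (ord1 j) mxE.
by have /= := u0 i (mem_index_enum _); rewrite -expr2 sqrf_eq0 => /eqP.
Qed.

Lemma dot_trmx_mulmx u (A : 'M[R]_n) v : (u^T *m A *m v) 0 0 = dot u (A *m v).
Proof. by rewrite /dot mulmxA. Qed.

Lemma dot_mulmx_sym (A : 'M[R]_n) u v : A^T = A -> dot u (A *m v) = dot (A *m u) v.
Proof. by move=> symA; rewrite /dot mulmxA trmx_mul symA. Qed.

Lemma enormE u : enorm u = Num.sqrt (dot u u).
Proof. by rewrite /enorm dotE; congr Num.sqrt; apply: eq_bigr => i _; rewrite expr2. Qed.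

Lemma enorm_ge0 u : 0 <= enorm u.
Proof. exact: sqrtr_ge0. Qed.

Lemma sqr_enorm u : enorm u ^+ 2 = dot u u.
Proof. by rewrite enormE sqr_sqrtr // dot_ge0. Qed.

Lemma dot_sqr_le u v : dot u v ^+ 2 <= dot u u * dot v v.
Proof.
apply: discriminant_le; first exact: dot_ge0.
move=> t; have := dot_ge0 (u + t *: v).
rewrite dotDl !dotDr !dotZl !dotZr (dotC v u).
suff -> : dot u u + t * dot u v + (t * dot u v + t * (t * dot v v)) =
   dot u u + 2 * dot u v * t + dot v v * t ^+ 2 by [].
ring.
Qed.

Lemma normr_dot_le u v : `|dot u v| <= enorm u * enorm v.
Proof.
rewrite !enormE -sqrtrM ?dot_ge0 // -sqrtr_sqr.
by apply: ler_wsqrtr; exact: dot_sqr_le.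
Qed.

Lemma dot_le u v : dot u v <= enorm u * enorm v.
Proof. exact: le_trans (ler_norm _) (normr_dot_le u v). Qed.

Lemma enormD u v : enorm (u + v) <= enorm u + enorm v.
Proof.
rewrite -ler_sqr ?nnegrE ?addr_ge0 ?enorm_ge0 //.
rewrite sqr_enorm dotDl !dotDr (dotC v u) -!sqr_enorm.
have := dot_le u v; lra.
Qed.

Lemma enormZ (c : R) u : enorm (c *: u) = `|c| * enorm u.
Proof.
rewrite !enormE dotZl dotZr mulrA -expr2 sqrtrM ?sqr_ge0 //.
by rewrite sqrtr_sqr.
Qed.

Lemma enormN u : enorm (- u) = enorm u.
Proof. by rewrite -scaleN1r enormZ normrN normr1 mul1r. Qed.

Lemma enormB_ge u v : `|enorm u - enorm v| <= enorm (u - v).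
Proof.
have le_u : enorm u <= enorm (u - v) + enorm v.
  by have := enormD (u - v) v; rewrite subrK.
have le_v : enorm v <= enorm (u - v) + enorm u.
  by have := enormD (v - u) u; rewrite subrK -(enormN (v - u)) opprB.
rewrite ler_norml; apply/andP; split; lra.
Qed.

Lemma mx_norm_le_enorm u : `|u| <= enorm u.
Proof.
have -> : `|u| = mx_norm u by [].
have [->|nz] := eqVneq (mx_norm u) 0; first exact: enorm_ge0.
have [[i j] ->] := mx_norm_neq0 nz; rewrite /= (ord1 j) /enorm -sqrtr_sqr.
apply: ler_wsqrtr; rewrite (bigD1 i) //= lerDl.
by apply: sumr_ge0 => k _; exact: sqr_ge0.
Qed.

End Euclidean.

Section Resolvent.
Context {R : realType} {n : nat}.
Context {B : 'M[R]_n} {h : R}.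
Hypotheses (psdB : psd_between B h) (symB : B^T = B) (h_gt0 : 0 < h).
Implicit Types (u v : 'cV[R]_n).

Lemma psd_dot_bounds u : 0 <= dot u (B *m u) <= h * dot u u.
Proof. by have := psdB u; rewrite dot_trmx_mulmx. Qed.

Lemma mulmx_shift (l : R) u : (B + l%:M) *m u = B *m u + l *: u.
Proof. by rewrite mulmxDl mul_scalar_mx. Qed.

Lemma shift_unitmx (l : R) : 0 < l -> B + l%:M \in unitmx.
Proof.
move=> l_gt0; rewrite unitmxE unitfE; apply/negP => /det0P [r r_neq0 rB0].
suff rT0 : r^T = 0 by move: r_neq0; rewrite -(trmxK r) rT0 trmx0 eqxx.
apply: dot_eq0.
have : (r *m (B + l%:M) *m r^T) 0 0 = 0 by rewrite rB0 mul0mx mxE.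
rewrite -{1}(trmxK r) dot_trmx_mulmx mulmx_shift dotDr dotZr.
have /andP [q_ge0 _] := psd_dot_bounds r^T; have := dot_ge0 r^T.
move=> rr_ge0 sum0; apply/eqP; rewrite eq_le rr_ge0 andbT.
by rewrite -(pmulr_rle0 _ l_gt0); lra.
Qed.

(* Cauchy-Schwarz for the semi-inner product [(u, v) |-> dot u (B *m v)],
   combined with [dot w (B *m w) <= h * dot w w] for [w := B *m u]. *)
Lemma dot_mulmx_le u : dot (B *m u) (B *m u) <= h * dot u (B *m u).
Proof.
set w := B *m u; set s := dot w w; set q := dot u w.
have q_ge0 : 0 <= q by have /andP[] := psd_dot_bounds u.
have s_ge0 : 0 <= s by exact: dot_ge0.
have /andP [wBw_ge0 wBw_le] := psd_dot_bounds w.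
have sqr_s_le : s ^+ 2 <= q * dot w (B *m w).
  apply: discriminant_le => // t.
  have /andP [+ _] := psd_dot_bounds (u + t *: w).
  rewrite mulmxDr -scalemxAr !dotDl !dotDr !dotZl !dotZr.
  rewrite (dot_mulmx_sym u w symB) -/w -/q -/s.
  suff -> : q + t * s + (t * s + t * (t * dot w (B *m w))) =
     q + 2 * s * t + dot w (B *m w) * t ^+ 2 by [].
  ring.
have [->|s_neq0] := eqVneq s 0; first by rewrite mulr_ge0 // ltW.
have s_gt0 : 0 < s by rewrite lt_neqAle eq_sym s_neq0.
rewrite -(ler_pM2r s_gt0) -expr2 (le_trans sqr_s_le) //.
by rewrite (mulrC h) -mulrA ler_wpM2l.
Qed.

Context {l : R}.
Hypothesis l_gt0 : 0 < l.
Local Notation res v := (invmx (B + l%:M) *m v).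

Lemma resolventK v : B *m res v + l *: res v = v.
Proof. by rewrite -mulmx_shift mulKVmx // shift_unitmx. Qed.

Lemma resolvent_dot_ge v : l * dot (res v) (res v) <= dot (res v) v.
Proof.
rewrite -[X in _ <= dot _ X](resolventK v) dotDr dotZr lerDr.
by have /andP[] := psd_dot_bounds (res v).
Qed.

Lemma resolvent_enorm_le v : l * enorm (res v) <= enorm v.
Proof.
have [->|u_neq0] := eqVneq (enorm (res v)) 0; first by rewrite mulr0 enorm_ge0.
have u_gt0 : 0 < enorm (res v) by rewrite lt_neqAle eq_sym u_neq0 enorm_ge0.
rewrite -(ler_pM2r u_gt0) -mulrA -expr2 sqr_enorm (mulrC (enorm v)).
exact: le_trans (resolvent_dot_ge v) (dot_le _ _).
Qed.

Lemma resolvent_dot_le v : dot v v <= (h + 2 * l) * dot (res v) v.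
Proof.
set u := res v; have Bu := resolventK v; rewrite -/u in Bu.
have vv : dot v v =
    dot (B *m u) (B *m u) + 2 * l * dot u (B *m u) + l ^+ 2 * dot u u.
  by rewrite -Bu !dotDl !dotDr !dotZl !dotZr (dotC u (B *m u)); ring.
have uv : dot u v = dot u (B *m u) + l * dot u u by rewrite -Bu dotDr dotZr.
have : l ^+ 2 * dot u u <= (h + 2 * l) * (l * dot u u).
  rewrite mulrA; apply: ler_wpM2r; first exact: dot_ge0.
  by have := mulr_gt0 h_gt0 l_gt0; have := mulr_gt0 l_gt0 l_gt0; nra.
rewrite vv uv; have := dot_mulmx_le u; nra.
Qed.

Context {a : R}.
Hypotheses (a_gt0 : 0 < a) (la_ge1 : 1 <= l * a) (la_le2 : l * a <= 2)
  (ah_le : a * h <= 1/4).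

Lemma resolvent_enorm_le_step v : enorm (res v) <= a * enorm v.
Proof.
exact: le_mul_of_mul_le a_gt0 la_ge1 (enorm_ge0 _) (resolvent_enorm_le v).
Qed.

Lemma resolvent_dot_le_step v : dot (res v) (res v) <= a * dot v (res v).
Proof.
rewrite dotC; apply: le_mul_of_mul_le a_gt0 la_ge1 (dot_ge0 _) _.
exact: resolvent_dot_ge.
Qed.

Lemma resolvent_sqr_le_step v : a * enorm v ^+ 2 <= 17 / 4 * dot v (res v).
Proof.
have p_ge0 : 0 <= dot (res v) v.
  by apply: le_trans (resolvent_dot_ge v); rewrite mulr_ge0 ?dot_ge0 ?ltW.
have coef_le : a * (h + 2 * l) <= 17 / 4 by rewrite mulrDr; move: ah_le la_le2; lra.
rewrite sqr_enorm (dotC v (res v)).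
apply: le_trans (_ : a * ((h + 2 * l) * dot (res v) v) <= _).
  by rewrite ler_pM2l // resolvent_dot_le.
by rewrite mulrA; apply: ler_wpM2r.
Qed.

End Resolvent.

Section Descent.
Context {R : realType} {n : nat}.
Context {f : 'cV[R]_n -> R}.
Hypothesis df : forall x, differentiable f x.
Implicit Types (x d : 'cV[R]_n).

Lemma derive_grad x d : 'D_d f x = dot (grad f x) d.
Proof.
have dfx := df x; rewrite deriveE // dotE {1}(matrix_sum_delta d) linear_sum.
apply: eq_bigr => i _; rewrite big_ord1 linearZ /= -deriveE //.
by rewrite /grad mxE mulrC.
Qed.

Lemma is_derive_line x d (t : R) :
  is_derive t 1 (fun s : R => f (x + s *: d)) (dot (grad f (x + t *: d)) d).
Proof.
have line_quot : (fun s : R => s^-1 *: (f (x + (s *: 1 + t) *: d) - f (x + t *: d))) =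
    (fun s : R => s^-1 *: (f (s *: d + (x + t *: d)) - f (x + t *: d))).
  apply: funext => s; rewrite -[s *: 1]/(s * 1) mulr1 scalerDl.
  by rewrite addrCA addrC.
have dfd : derivable f (x + t *: d) d by exact: diff_derivable.
apply: DeriveDef; rewrite /derivable /derive /= line_quot //.
by rewrite -derive_grad.
Qed.

Lemma descent_le {L : R} : 0 <= L ->
  (forall x y, enorm (grad f x - grad f y) <= L * enorm (x - y)) ->
  forall x d, f (x + d) <= f x + dot (grad f x) d + L * enorm d ^+ 2.
Proof.
move=> L_ge0 lip x d.
have cont : {within `[0, 1], continuous (fun s : R => f (x + s *: d))}.
  by apply: derivable_within_continuous => t _; case: (is_derive_line x d t).
have [c c01 mvt] := MVT ltr01 (fun t _ => is_derive_line x d t) cont.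
move: c01 mvt; rewrite in_itv /= scale0r addr0 scale1r subr0 mulr1.
move=> /andP [c_gt0 c_lt1] mvt.
have -> : f (x + d) = f x + dot (grad f (x + c *: d)) d by rewrite -mvt; ring.
rewrite -addrA lerD2l -[dot (grad f _) d](subrK (dot (grad f x) d)) -dotBl.
rewrite [X in X <= _]addrC lerD2l; apply: le_trans (dot_le _ _) _.
have := lip (x + c *: d) x; rewrite addrAC subrr add0r enormZ (ger0_norm (ltW c_gt0)).
move=> lip_c; apply: le_trans (ler_wpM2r (enorm_ge0 d) lip_c) _.
have -> : L * (c * enorm d) * enorm d = c * (L * enorm d ^+ 2) by ring.
by apply: ler_piMl; [exact: mulr_ge0 L_ge0 (sqr_ge0 _) | exact: ltW].
Qed.

End Descent.

Section Step.
Context {R : realType} {n : nat}.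
Variables (f : 'cV[R]_n -> R) (L h a l : R) (B : 'M[R]_n) (x g : 'cV[R]_n).
Hypotheses (df : forall y, differentiable f y)
  (lip : forall y z, enorm (grad f y - grad f z) <= L * enorm (y - z))
  (L_ge0 : 0 <= L) (h_gt0 : 0 < h) (a_gt0 : 0 < a)
  (La_le : L * a <= 1/4) (ah_le : a * h <= 1/4)
  (la_ge1 : 1 <= l * a) (la_le2 : l * a <= 2)
  (psdB : psd_between B h) (symB : B^T = B).

Local Notation res v := (invmx (B + l%:M) *m v).
Local Notation G := (grad f x).
Local Notation e := (g - grad f x).

Let l_gt0 : 0 < l.
Proof. by rewrite -(pmulr_lgt0 _ a_gt0) (lt_le_trans ltr01). Qed.

Let g_split : g = G + e.
Proof. by rewrite addrCA subrr addr0. Qed.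

Lemma step_enorm_le : enorm (res g) <= a * (enorm G + enorm e).
Proof.
apply: le_trans (resolvent_enorm_le_step psdB l_gt0 a_gt0 la_ge1 g) _.
by rewrite ler_pM2l // {1}g_split enormD.
Qed.

(* The descent lemma along [- res g], splitting [res g = res G + res e]. *)
Lemma step_decrease :
  f (x - res g) <= f x - a / 20 * enorm G ^+ 2 + 6 * a * enorm e ^+ 2.
Proof.
set u := res G; set w := res e.
have res_g : res g = u + w by rewrite {1}g_split mulmxDr.
apply: le_trans (descent_le df L_ge0 lip x (- res g)) _.
rewrite res_g dotNr dotDr enormN.
have uw_le : enorm (u + w) ^+ 2 <= 2 * dot u u + 2 * enorm w ^+ 2.
  rewrite !sqr_enorm dotDl !dotDr (dotC w u).
  have := dot_ge0 (u - w); rewrite dotBl !dotDr !dotNr (dotC w u); lra.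
set p := dot G u; set U := dot u u in uw_le *; set W := enorm w in uw_le *.
set Gn := enorm G; set En := enorm e.
have U_le : U <= a * p := resolvent_dot_le_step psdB l_gt0 a_gt0 la_ge1 G.
have W_le : W <= a * En := resolvent_enorm_le_step psdB l_gt0 a_gt0 la_ge1 e.
have Gn_le : a * Gn ^+ 2 <= 17 / 4 * p.
  exact (resolvent_sqr_le_step psdB symB h_gt0 l_gt0 a_gt0 la_le2 ah_le G).
have Gw_le : - dot G w <= Gn * W.
  by apply: le_trans (ler_norm _) _; rewrite normrN normr_dot_le.
have U_ge0 : 0 <= U := dot_ge0 u.
have W_ge0 : 0 <= W := enorm_ge0 w.
have En_ge0 : 0 <= En := enorm_ge0 e.
have Gn_ge0 : 0 <= Gn := enorm_ge0 G.
have p_ge0 : 0 <= p by have := le_trans U_ge0 U_le; rewrite pmulr_rge0.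
have LU_le : 2 * L * U <= p / 2.
  have : L * U <= L * (a * p) by rewrite ler_wpM2l.
  have : (L * a) * p <= 1 / 4 * p by rewrite ler_wpM2r.
  lra.
have GW_le : Gn * W <= a * (Gn ^+ 2 / 20 + 5 * En ^+ 2).
  have : Gn * W <= Gn * (a * En) by rewrite ler_wpM2l.
  have : 0 <= a * (Gn - 10 * En) ^+ 2 by rewrite mulr_ge0 ?sqr_ge0 ?ltW.
  lra.
have LW_le : 2 * L * W ^+ 2 <= a / 2 * En ^+ 2.
  have : L * W ^+ 2 <= L * (a ^+ 2 * En ^+ 2).
    by rewrite ler_wpM2l // -exprMn !expr2 ler_pM.
  have : (L * a) * (a * En ^+ 2) <= 1 / 4 * (a * En ^+ 2).
    exact (ler_wpM2r (mulr_ge0 (ltW a_gt0) (sqr_ge0 _)) La_le).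
  lra.
have : L * enorm (u + w) ^+ 2 <= 2 * L * U + 2 * L * W ^+ 2.
  by have := ler_wpM2l L_ge0 uw_le; lra.
have : 0 <= a * En ^+ 2 by rewrite mulr_ge0 ?sqr_ge0 ?ltW.
move: Gn_le Gw_le; lra.
Qed.

Lemma step_grad_sqr_le :
  enorm (grad f (x - res g)) ^+ 2 <=
    enorm G ^+ 2 + 6 * L * a * (enorm G ^+ 2 + enorm e ^+ 2).
Proof.
have dist_le : enorm (grad f (x - res g)) - enorm G <= L * (a * (enorm G + enorm e)).
  apply: le_trans (ler_norm _) _; apply: le_trans (enormB_ge _ _) _.
  apply: le_trans (lip _ _) _; rewrite addrAC subrr add0r enormN.
  exact (ler_wpM2l L_ge0 step_enorm_le).
have La_ge0 : 0 <= L * a := mulr_ge0 L_ge0 (ltW a_gt0).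
rewrite -[6 * L * a]mulrA.
refine (sqr_le_of_increment (enorm_ge0 _) (enorm_ge0 _) (enorm_ge0 _) La_ge0 La_le _).
by rewrite mulrA in dist_le; lra.
Qed.

End Step.

Section RealSequences.
Context {R : realType}.
Implicit Types (a x y d V : nat -> R).

Lemma psum_le_nat (d : nat -> R) k m : (forall i, 0 <= d i) -> (k <= m)%N ->
  \sum_(0 <= i < k) d i <= \sum_(0 <= i < m) d i.
Proof.
move=> d_ge0 km; rewrite (big_cat_nat (leq0n k) km) /= lerDl.
by apply: sumr_ge0 => i _.
Qed.

Lemma le_sum_increments x d k m : (forall i, x i.+1 <= x i + d i) -> (k <= m)%N ->
  x m <= x k + \sum_(k <= i < m) d i.
Proof.
move=> incr; elim: m => [|m IHm].
  by rewrite leqn0 => /eqP ->; rewrite big_geq // addr0.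
rewrite leq_eqVlt => /orP [/eqP ->|km]; first by rewrite big_geq // addr0.
rewrite big_nat_recr //=; apply: le_trans (incr m) _.
by rewrite addrA lerD2r IHm.
Qed.

Lemma lyapunov_weighted_psum_le a x y V (c C Y : R) :
  (forall k, 0 <= V k) -> 0 < c -> 0 <= C ->
  (forall k, V k.+1 <= V k - c * a k * x k + C * a k * y k) ->
  (forall m, \sum_(0 <= k < m) a k * y k <= Y) ->
  forall m, \sum_(0 <= k < m) a k * x k <= (V 0%N + C * Y) / c.
Proof.
move=> V_ge0 c_gt0 C_ge0 decr sum_y m.
have telescope : V m <= V 0%N - c * \sum_(0 <= k < m) a k * x k
                           + C * \sum_(0 <= k < m) a k * y k.
  elim: m {sum_y} => [|m IHm]; first by rewrite !big_geq // !mulr0 subr0 addr0.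
  rewrite !big_nat_recr //=; apply: le_trans (decr m) _.
  rewrite !mulrDr; lra.
rewrite ler_pdivlMr // mulrC.
have := V_ge0 m; have := ler_wpM2l C_ge0 (sum_y m); lra.
Qed.

Lemma psum_tail_lt (d : nat -> R) (M : R) : (forall k, 0 <= d k) ->
  (forall m, \sum_(0 <= k < m) d k <= M) ->
  forall eps, 0 < eps -> exists K, forall m, (K <= m)%N -> \sum_(K <= k < m) d k < eps.
Proof.
move=> d_ge0 bounded eps eps_gt0.
set S := fun m => \sum_(0 <= k < m) d k.
have S_sup : has_sup (range S).
  split; first by exists (S 0%N), 0%N.
  by exists M => _ [m _ <-]; exact: bounded.
have [_ [K _ <-] SK_gt] := sup_adherent eps_gt0 S_sup.
exists K => m Km; rewrite ltrBlDr in SK_gt.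
have Sm_le : S m <= sup (range S) by apply: sup_upper_bound => //; exists m.
have : S m = S K + \sum_(K <= k < m) d k by rewrite /S (big_cat_nat (leq0n K) Km).
lra.
Qed.

(* If [x k >= eps] for all [k >= K], the weighted sums would grow like [eps * \sum a]. *)
Lemma often_lt_of_weighted_psum_le a x (X : R) :
  (forall k, 0 < a k) -> (forall k, 0 <= x k) ->
  (forall M, exists m, M < \sum_(0 <= k < m) a k) ->
  (forall m, \sum_(0 <= k < m) a k * x k <= X) ->
  forall eps K, 0 < eps -> exists2 k, (K <= k)%N & x k < eps.
Proof.
move=> a_gt0 x_ge0 a_unbounded sum_ax eps K eps_gt0.
apply: contrapT => none_lt.
have x_ge k : (K <= k)%N -> eps <= x k.
  by move=> Kk; rewrite leNgt; apply/negP => lt; apply: none_lt; exists k.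
have [m m_gt] := a_unbounded (\sum_(0 <= k < K) a k + X / eps).
set m' := maxn m K; have Km' : (K <= m')%N := leq_maxr m K.
have : \sum_(0 <= k < m) a k <= \sum_(0 <= k < m') a k.
  by apply: psum_le_nat; [move=> i; exact: ltW | exact: leq_maxl].
rewrite (big_cat_nat (leq0n K) Km') /= => sum_m_le.
have tail_ge : eps * \sum_(K <= k < m') a k <= \sum_(K <= k < m') a k * x k.
  rewrite mulr_sumr big_nat_cond [leRHS]big_nat_cond.
  apply: ler_sum => i /andP [/andP [Ki _] _].
  by rewrite mulrC ler_pM2l ?x_ge.
have tail_le : \sum_(K <= k < m') a k * x k <= X.
  apply: le_trans (sum_ax m'); rewrite (big_cat_nat (leq0n K) Km') /= lerDr.
  by apply: sumr_ge0 => i _; exact: mulr_ge0 (ltW (a_gt0 i)) (x_ge0 i).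
have : X / eps < \sum_(K <= k < m') a k by lra.
by rewrite ltr_pdivrMr // mulrC; lra.
Qed.

(* Once [x] has been small after the point where the tail of [\sum d] is small,
   the increments can no longer make it large. *)
Lemma eventually_lt_of_often_lt x d (M : R) : (forall k, 0 <= d k) ->
  (forall m, \sum_(0 <= k < m) d k <= M) -> (forall k, x k.+1 <= x k + d k) ->
  (forall eps K, 0 < eps -> exists2 k, (K <= k)%N & x k < eps) ->
  forall eps, 0 < eps -> exists K, forall m, (K <= m)%N -> x m < eps.
Proof.
move=> d_ge0 sum_d incr often eps eps_gt0.
have eps2_gt0 : 0 < eps / 2 by rewrite divr_gt0.
have [K tail_lt] := psum_tail_lt d_ge0 sum_d eps2_gt0.
have [k Kk xk_lt] := often (eps / 2) K eps2_gt0.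
exists k => m km; apply: le_lt_trans (le_sum_increments incr km) _.
have : \sum_(k <= i < m) d i <= \sum_(K <= i < m) d i.
  rewrite (big_cat_nat Kk km) /= lerDr.
  by apply: sumr_ge0 => i _.
have := tail_lt m (leq_trans Kk km); lra.
Qed.

Lemma eventually_lt_of_descent a x y V (c C D Y : R) :
  (forall k, 0 < a k) -> (forall k, 0 <= x k) -> (forall k, 0 <= y k) ->
  (forall k, 0 <= V k) -> 0 < c -> 0 <= C -> 0 <= D ->
  (forall k, V k.+1 <= V k - c * a k * x k + C * a k * y k) ->
  (forall k, x k.+1 <= x k + D * a k * (x k + y k)) ->
  (forall M, exists m, M < \sum_(0 <= k < m) a k) ->
  (forall m, \sum_(0 <= k < m) a k * y k <= Y) ->
  forall eps, 0 < eps -> exists K, forall m, (K <= m)%N -> x m < eps.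
Proof.
move=> a_gt0 x_ge0 y_ge0 V_ge0 c_gt0 C_ge0 D_ge0 decr incr a_unb sum_y.
have [X sum_x] : exists X, forall m, \sum_(0 <= k < m) a k * x k <= X.
  by eexists; exact: lyapunov_weighted_psum_le V_ge0 c_gt0 C_ge0 decr sum_y.
have d_ge0 k : 0 <= D * a k * (x k + y k).
  by rewrite mulr_ge0 ?addr_ge0 // mulr_ge0 // ltW.
have sum_d m : \sum_(0 <= k < m) D * a k * (x k + y k) <= D * (X + Y).
  under eq_bigr do rewrite -mulrA mulrDr.
  by rewrite -mulr_sumr big_split /= ler_wpM2l // lerD.
apply: eventually_lt_of_often_lt d_ge0 sum_d incr _.
exact: often_lt_of_weighted_psum_le a_gt0 x_ge0 a_unb sum_x.
Qed.

Lemma divergent_psum_unbounded a : (forall k, 0 <= a k) ->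
  (\sum_(0 <= k <oo) (a k)%:E = +oo)%E ->
  forall M, exists m, M < \sum_(0 <= k < m) a k.
Proof.
move=> a_ge0 a_div M; apply: contrapT => none_gt.
have psum_le m : \sum_(0 <= k < m) a k <= M.
  by rewrite leNgt; apply/negP => lt; apply: none_gt; exists m.
have : (\sum_(0 <= k <oo) (a k)%:E <= M%:E)%E.
  apply: lime_le; first by apply: is_cvg_nneseries => k _ _; rewrite lee_fin.
  by apply: nearW => m; rewrite sumEFin lee_fin.
by rewrite a_div leye_eq.
Qed.

End RealSequences.

Section ConditionalVariance.
Context {d : measure_display} {T : measurableType d} {R : realType}.
Variable P : probability T R.
Local Open Scope ereal_scope.

Lemma sub_sigma_setT (G : set (set T)) : sub_sigma G -> G setT.
Proof. by move=> [[G0 GC _] _]; have := GC _ G0; rewrite setD0. Qed.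

Lemma integral_le_of_cond_exp_le (G : set (set T)) (X Z : T -> R) (s : R) :
  G setT -> (0 <= s)%R -> is_cond_exp P G X Z -> {ae P, forall w, (Z w <= s)%R} ->
  \int[P]_(w in setT) (X w)%:E <= s%:E.
Proof.
move=> GT s_ge0 [_ [_ [iZ int_eq]]] Z_le.
rewrite int_eq // integralE -[s%:E]sube0.
apply: leeB; last by apply: integral_ge0 => w _; exact: funeneg_ge0.
apply: le_trans (_ : \int[P]_(w in setT) (cst s%:E w) <= _); last first.
  by rewrite integral_cst // [X in _ * X](_ : _ = 1) ?mule1 //; exact: probability_setT.
have mZ : measurable_fun [set: T] (fun w => (Z w)%:E : \bar R) by case/integrableP: iZ.
apply: ae_ge0_le_integral => //; first exact: measurable_funepos mZ.
apply: filterS Z_le => w Zw_le _.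
by rewrite funeposE /cst ge_max !lee_fin Zw_le s_ge0.
Qed.

(* By monotone convergence, [E (\sum_k a_k X_k) <= \sum_k a_k s_k < +oo], so the
   series is almost surely finite. *)
Lemma ae_weighted_psum_bounded (a s : nat -> R) (X : nat -> T -> R)
    (F : nat -> set (set T)) :
  (forall k, 0 < a k)%R -> (forall k w, 0 <= X k w)%R -> (forall k, 0 <= s k)%R ->
  (forall k, F k setT) ->
  (forall k, exists Z, is_cond_exp P (F k) (X k) Z /\ {ae P, forall w, (Z w <= s k)%R}) ->
  \sum_(0 <= k <oo) (a k * s k)%:E < +oo ->
  {ae P, forall w, exists Y : R, forall m, (\sum_(0 <= k < m) a k * X k w <= Y)%R}.
Proof.
move=> a_gt0 X_ge0 s_ge0 FT cond_le sum_as.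
set f := fun k w => (a k * X k w)%:E.
have f_ge0 k w : 0 <= f k w by rewrite lee_fin mulr_ge0 // ltW.
have mX k : measurable_fun [set: T] (fun w => (X k w)%:E : \bar R).
  by have [Z [[_ [iX _]] _]] := cond_le k; case/integrableP: iX.
have mf k : measurable_fun setT (f k).
  by rewrite /f; under eq_fun do rewrite EFinM; exact: measurable_funeM.
have int_f k : \int[P]_(w in setT) f k w <= (a k * s k)%:E.
  have [Z [ce Z_le]] := cond_le k.
  have -> : \int[P]_(w in setT) f k w = (a k)%:E * \int[P]_(w in setT) (X k w)%:E.
    rewrite /f; under eq_integral do rewrite EFinM.
    rewrite ge0_integralZl_EFin //; last exact: ltW.
    by move=> w _; rewrite lee_fin.
  rewrite EFinM lee_pmul2l ?lte_fin //.
  exact: integral_le_of_cond_exp_le (FT k) (s_ge0 k) ce Z_le.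
set Sf := fun w => \sum_(0 <= k <oo) f k w.
have mSf : measurable_fun setT Sf by exact: (ge0_emeasurable_sum (P := xpredT)).
have iSf : P.-integrable setT Sf.
  apply/integrableP; split => //.
  under eq_integral do rewrite gee0_abs ?nneseries_ge0 //.
  rewrite /Sf integral_nneseries //; apply: le_lt_trans sum_as.
  apply: lee_nneseries => [k _ _|k _]; last exact: int_f.
  by apply: integral_ge0 => w _.
apply: filterS (integrable_ae measurableT iSf) => w /(_ I) Sf_fin.
exists (fine (Sf w)) => m; rewrite -lee_fin fineK // -sumEFin.
by apply: (@nneseries_lim_ge _ (fun i => f i w) xpredT 0%N m) => i _ _.
Qed.

End ConditionalVariance.

Section StepSizes.
Context {R : realType}.

Lemma reg_lambda_mulr_bounds (r1 r2 a ng : R) : 0 < r1 -> r1 < r2 -> 0 < a -> 0 <= ng ->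
  1 <= reg_lambda r1 r2 a ng * a <= 2.
Proof.
move=> r1_gt0 r12 a_gt0 ng_ge0; rewrite /reg_lambda.
have inva : a^-1 * a = 1 by rewrite mulVf // gt_eqF.
case: ifP => [ng_lt|_]; last case: ifP => [ng_gt|_]; rewrite ?inva ?lexx ?ler1n //.
  rewrite -mulrA inva mulr1 ler_pdivlMr ?ler_pdivrMr; lra.
rewrite -mulrA inva mulr1 ler_pdivlMr ?ler_pdivrMr; lra.
Qed.

Lemma step_size_quarter (r1 r2 L h a : R) : 0 < r1 -> r1 < r2 -> 0 <= L -> 0 < h ->
  0 < a -> a <= r1 / (4 * r2 * (L + h)) -> L * a <= 1/4 /\ a * h <= 1/4.
Proof.
move=> r1_gt0 r12 L_ge0 h_gt0 a_gt0.
have r2_gt0 : 0 < r2 := lt_trans r1_gt0 r12.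
rewrite ler_pdivlMr ?mulr_gt0 ?ltr_wpDl //.
have -> : a * (4 * r2 * (L + h)) = (4 * a * (L + h)) * r2 by ring.
move=> le_r1; have : 4 * a * (L + h) <= 1.
  by rewrite -(ler_pM2r r2_gt0) mul1r; lra.
split; nra.
Qed.

End StepSizes.

Section RegularizedQuasiNewtonPath.
Context {R : realType} {n : nat}.

Lemma regularized_qn_grad_cvg (f : 'cV[R]_n -> R) (L h : R) (alpha lam : nat -> R)
    (B : nat -> 'M[R]_n) (x g : nat -> 'cV[R]_n) :
  (forall y, differentiable f y) ->
  (forall y z, enorm (grad f y - grad f z) <= L * enorm (y - z)) ->
  (exists finf, forall y, finf <= f y) -> 0 <= L -> 0 < h ->
  (forall k, 0 < alpha k) ->
  (forall k, L * alpha k <= 1/4 /\ alpha k * h <= 1/4) ->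
  (forall k, 1 <= lam k * alpha k <= 2) ->
  (forall k, psd_between (B k) h) -> (forall k, (B k)^T = B k) ->
  (forall k, x k.+1 = x k - invmx (B k + (lam k)%:M) *m g k) ->
  (forall M, exists m, M < \sum_(0 <= k < m) alpha k) ->
  (exists Y, forall m,
      \sum_(0 <= k < m) alpha k * enorm (g k - grad f (x k)) ^+ 2 <= Y) ->
  grad f (x k) @[k --> \oo] --> (0 : 'cV[R]_n).
Proof.
move=> df lip [finf finf_le] L_ge0 h_gt0 a_gt0 small lam_bd psdB symB xS a_unb [Y sum_e].
set G2 := fun k => enorm (grad f (x k)) ^+ 2.
set E2 := fun k => enorm (g k - grad f (x k)) ^+ 2.
have G2_ge0 k : 0 <= G2 k := sqr_ge0 _.
have E2_ge0 k : 0 <= E2 k := sqr_ge0 _.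
have la_ge1 k : 1 <= lam k * alpha k by case/andP: (lam_bd k).
have la_le2 k : lam k * alpha k <= 2 by case/andP: (lam_bd k).
have decr k : f (x k.+1) - finf <=
    f (x k) - finf - 1/20 * alpha k * G2 k + 6 * alpha k * E2 k.
  have := step_decrease (x k) (g k) df lip L_ge0 h_gt0 (a_gt0 k) (small k).1
    (small k).2 (la_ge1 k) (la_le2 k) (psdB k) (symB k).
  by rewrite -xS /G2 /E2 mul1r mulrC; lra.
have incr k : G2 k.+1 <= G2 k + 6 * L * alpha k * (G2 k + E2 k).
  have := step_grad_sqr_le (x k) (g k) lip L_ge0 (a_gt0 k) (small k).1
    (la_ge1 k) (psdB k).
  by rewrite -xS.
have V_ge0 k : 0 <= f (x k) - finf by rewrite subr_ge0.
have c_gt0 : 0 < 1 / 20 :> R by rewrite divr_gt0.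
have G2_small := eventually_lt_of_descent a_gt0 G2_ge0 E2_ge0 V_ge0 c_gt0
  (ler0n _ 6) (mulr_ge0 (ler0n _ 6) L_ge0) decr incr a_unb sum_e.
apply/cvgrPdist_lt => eps eps_gt0.
have [K G2_lt] := G2_small _ (exprn_gt0 2 eps_gt0).
exists K => // m /= Km; rewrite sub0r normrN.
apply: le_lt_trans (mx_norm_le_enorm _) _.
by rewrite -ltr_sqr ?nnegrE ?enorm_ge0 ?ltW // G2_lt.
Qed.

End RegularizedQuasiNewtonPath.

Theorem theorem1
  (d : measure_display) (T : measurableType d) (R : realType)
  (P : probability T R) (n N : nat)
  (psi : 'I_N -> 'cV[R]_n -> R)
  (r1 r2 LPsi h : R) (alpha sigma : nat -> R)
  (F : nat -> set (set T))          (* F k stands for the paper's F_{k-1} *)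
  (S : nat -> T -> {set 'I_N})      (* random index sets S_g^k *)
  (theta : nat -> T -> 'cV[R]_n)
  (g : nat -> T -> 'cV[R]_n)        (* stochastic gradients g_k *)
  (g_init : T -> 'cV[R]_n)          (* the "g_{-1}" used to form lambda_0 *)
  (H Lam : nat -> T -> 'M[R]_n)
  (lambda : nat -> T -> R) :
  let Psi := fun x => N%:R^-1 * \sum_(i < N) psi i x in
  let B := fun k w => H k w + Lam k w in
  (0 < N)%N ->
  0 < r1 -> r1 < r2 ->
  (forall k, 0 < alpha k) ->
  (forall k, 0 <= sigma k) ->
  (* the ψ_i are differentiable, so that ∇ψ_i makes sense *)
  (forall i x, differentiable (psi i) x) ->
  (* the method S2QN, with beta_k = 1 *)
  (forall k w, (0 < #|S k w|)%N) ->
  (forall k w, g k w = #|S k w|%:R^-1 *: \sum_(i in S k w) grad (psi i) (theta k w)) ->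
  (forall k w, symmetric_mx (B k w)) ->
  (forall k w, lambda k w =
     reg_lambda r1 r2 (alpha k)
       (enorm (if k is k'.+1 then g k' w else g_init w))) ->
  (forall k w, theta k.+1 w =
     theta k w - invmx (B k w + (lambda k w)%:M) *m g k w) ->
  (* filtration: theta_k is F_{k-1}-measurable; g_k, B_k (and g_{-1}) adapted *)
  filtration F ->
  (forall k, mx_meas_wrt (F k) (theta k)) ->
  (forall k, mx_meas_wrt (F k.+1) (g k)) ->
  (forall k, mx_meas_wrt (F k.+1) (B k)) ->
  mx_meas_wrt (F 0%N) g_init ->
  (* (i) *)
  (forall x, differentiable Psi x) -> continuous (grad Psi) ->
  (exists Psi_inf : R, forall x, Psi_inf <= Psi x) ->
  1 <= LPsi ->
  (forall x y, enorm (grad Psi x - grad Psi y) <= LPsi * enorm (x - y)) ->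
  (* (ii) *)
  (forall k, cond_indep P (F k) (B k) (g k)) ->
  (forall k (i : 'I_n), exists Z, is_cond_exp P (F k) (fun w => g k w i 0) Z /\
       {ae P, forall w, Z w = grad Psi (theta k w) i 0}) ->
  (* (iii) *)
  (forall k, exists Z,
       is_cond_exp P (F k) (fun w => enorm (g k w - grad Psi (theta k w)) ^+ 2) Z /\
       {ae P, forall w, Z w <= sigma k ^+ 2}) ->
  (* (iv) *)
  0 < h ->
  (forall k w, psd_between (B k w) h) ->
  (* step-size conditions *)
  (forall k, alpha k <= r1 / (4 * r2 * (LPsi + h))) ->
  (\sum_(0 <= k <oo) (alpha k)%:E = +oo)%E ->
  (\sum_(0 <= k <oo) (alpha k * sigma k ^+ 2)%:E < +oo)%E ->
  {ae P, forall w, (fun k => grad Psi (theta k w)) @ \oo --> (0 : 'cV[R]_n)}.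
Proof.
move=> Psi B _ r1_gt0 r12 alpha_gt0 _ _ _ _ symB lambdaE thetaS filtF _ _ _ _
  dPsi _ Psi_lb L_ge1 lip _ _ noise_var h_gt0 psdB alpha_le alpha_div noise_sum.
have L_ge0 : 0 <= LPsi by lra.
have small k := step_size_quarter r1_gt0 r12 L_ge0 h_gt0 (alpha_gt0 k) (alpha_le k).
have alpha_unb := divergent_psum_unbounded (fun k => ltW (alpha_gt0 k)) alpha_div.
have FT k : F k setT := sub_sigma_setT (filtF.1 k).
have := ae_weighted_psum_bounded alpha_gt0 (fun k w => sqr_ge0 _)
  (fun k => sqr_ge0 (sigma k)) FT noise_var noise_sum.
apply: filterS => w noise_sum_w.
have lambda_bd k : 1 <= lambda k w * alpha k <= 2.
  by rewrite lambdaE reg_lambda_mulr_bounds ?enorm_ge0.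
exact: regularized_qn_grad_cvg dPsi lip Psi_lb L_ge0 h_gt0 alpha_gt0 small
  lambda_bd (psdB^~ w) (symB^~ w) (thetaS^~ w) alpha_unb noise_sum_w.
Qed.
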